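(* Let ${\mathcal M}:{\mathbb E}\to{\mathbb F}$ be a surjective linear map between finite-dimensional Euclidean spaces, $\mathcal{K}\subseteq{\mathbb E}$ a convex cone, $b\in{\mathbb F}$, and suppose ${\mathcal F}=\{X\in\mathcal{K}:{\mathcal M}(X)=b\}\neq\emptyset$. Then the singularity degree of the system ${\mathcal F}$ over $\mathcal{K}$ equals the singularity degree of the face $\operatorname{face}(b,{\mathcal M}(\mathcal{K}))$ over the cone ${\mathcal M}(\mathcal{K})$. *)

(* Euclidean spaces E = R^n, F = R^m realised as row vectors
   'rV[R]_n with the standard inner product; a linear map E -> F is X |-> X *m A
   for a matrix A : 'M_(n, m); its adjoint is y |-> y *m A^T. *)
From HB Require Import structures.
From mathcomp Require Import all_boot all_order all_algebra.
Set Implicit Arguments. Unset Strict Implicit. Unset Printing Implicit Defensive.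
Import Order.TTheory GRing.Theory Num.Theory.
Local Open Scope ring_scope.

Section Defs.
Variable R : realFieldType.

Definition dotv (n : nat) (u v : 'rV[R]_n) : R := \sum_(i < n) u 0 i * v 0 i.

Definition is_convex_cone (n : nat) (K : 'rV[R]_n -> Prop) : Prop :=
  (forall x t, K x -> 0 <= t -> K (t *: x)) /\
  (forall x y t, K x -> K y -> 0 <= t -> t <= 1 -> K (t *: x + (1 - t) *: y)).

Definition is_face (n : nat) (C G : 'rV[R]_n -> Prop) : Prop :=
  (forall x, G x -> C x) /\
  (forall x y t, G x -> G y -> 0 <= t -> t <= 1 -> G (t *: x + (1 - t) *: y)) /\
  (forall x y t, C x -> C y -> 0 < t -> t < 1 -> G (t *: x + (1 - t) *: y) ->
     G x /\ G y).

Definition min_face (n : nat) (S C : 'rV[R]_n -> Prop) : 'rV[R]_n -> Prop :=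
  fun x => forall G, is_face C G -> (forall s, S s -> G s) -> G x.

Definition dual_cone (n : nat) (C : 'rV[R]_n -> Prop) : 'rV[R]_n -> Prop :=
  fun v => forall x, C x -> 0 <= dotv v x.

Definition is_exposed_face (n : nat) (C G : 'rV[R]_n -> Prop) : Prop :=
  exists v, dual_cone C v /\ (forall x, G x <-> (C x /\ dotv v x = 0)).

Definition face_chain (n : nat) (C f : 'rV[R]_n -> Prop) (d : nat) : Prop :=
  exists Fs : nat -> 'rV[R]_n -> Prop,
    (forall x, Fs 0%N x <-> C x) /\
    (forall i, (i < d)%N -> is_exposed_face (Fs i) (Fs i.+1)) /\
    (forall x, Fs d x <-> f x).

Definition face_sd (n : nat) (C f : 'rV[R]_n -> Prop) (d : nat) : Prop :=
  face_chain C f d /\ forall d', (d' < d)%N -> ~ face_chain C f d'.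

Definition feas_set (n m : nat) (A : 'M[R]_(n, m)) (K : 'rV[R]_n -> Prop)
  (b : 'rV[R]_m) : 'rV[R]_n -> Prop := fun X => K X /\ X *m A = b.

Definition fr_sequence (n m : nat) (A : 'M[R]_(n, m)) (K : 'rV[R]_n -> Prop)
  (b : 'rV[R]_m) (d : nat) : Prop :=
  exists (ys : nat -> 'rV[R]_m) (Ks : nat -> 'rV[R]_n -> Prop),
    (forall x, Ks 0%N x <-> K x) /\
    (forall i, (i < d)%N ->
       dual_cone (Ks i) (ys i *m A^T) /\ dotv b (ys i) = 0 /\
       (forall x, Ks i.+1 x <-> (Ks i x /\ dotv (ys i *m A^T) x = 0))) /\
    (forall x, Ks d x <-> min_face (feas_set A K b) K x).

Definition system_sd (n m : nat) (A : 'M[R]_(n, m)) (K : 'rV[R]_n -> Prop)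
  (b : 'rV[R]_m) (d : nat) : Prop :=
  fr_sequence A K b d /\ forall d', (d' < d)%N -> ~ fr_sequence A K b d'.

Definition image_set (n m : nat) (A : 'M[R]_(n, m)) (K : 'rV[R]_n -> Prop)
  : 'rV[R]_m -> Prop := fun z => exists X, K X /\ z = X *m A.

End Defs.

(* The linear map M identifies the faces of K that contain the feasible set F
   with the faces of the image cone M(K) that contain b: the smallest face of K
   containing F is the preimage {X in K : M X in face(b, M(K))}, and because
   <y, M X> = <M^* y, X>, a facial reduction step for the system with
   certificate y exposes exactly the preimage of the face of M(K) exposed by y.
   Chains of exposed faces of M(K) ending at face(b, M(K)) and facial reduction
   sequences of the system therefore correspond length for length, so the two
   singularity degrees coincide. *)
From mathcomp Require Import all_boot all_order all_algebra.
From mathcomp Require Import reals.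
From mathcomp Require Import ring lra.
From Stdlib Require Import ClassicalEpsilon.
Set Implicit Arguments. Unset Strict Implicit. Unset Printing Implicit Defensive.
Import Order.TTheory GRing.Theory Num.Theory.
Local Open Scope ring_scope.

Section ConeFaces.
Variable R : realFieldType.
Implicit Types (n m : nat).

Lemma dotvC n (u v : 'rV[R]_n) : dotv u v = dotv v u.
Proof. by apply: eq_bigr => i _; rewrite mulrC. Qed.

Lemma dotv_mulmx n m (A : 'M[R]_(n, m)) (v : 'rV[R]_m) (x : 'rV[R]_n) :
  dotv v (x *m A) = dotv (v *m A^T) x.
Proof.
rewrite /dotv.
under eq_bigr => j _ do rewrite mxE big_distrr.
under [RHS]eq_bigr => i _ do rewrite mxE big_distrl.
rewrite exchange_big; apply: eq_bigr => i _; apply: eq_bigr => j _.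
by rewrite !mxE /= mulrCA mulrC.
Qed.

Definition is_convex n (C : 'rV[R]_n -> Prop) : Prop :=
  forall x y t, C x -> C y -> 0 <= t -> t <= 1 -> C (t *: x + (1 - t) *: y).

Lemma convex_coneD n (C : 'rV[R]_n -> Prop) x y :
  is_convex_cone C -> C x -> C y -> C (x + y).
Proof.
move=> [Cscale Cconvex] Cx Cy.
have -> : x + y = 2 *: (2^-1 *: x + (1 - 2^-1) *: y).
  have half : (1 : R) - 2^-1 = 2^-1 by rewrite [X in X - _](splitr 1) mul1r addrK.
  by rewrite half -scalerDr scalerA mulfV ?pnatr_eq0 // scale1r.
apply: Cscale; last by rewrite ler0n.
by apply: Cconvex; rewrite ?invr_ge0 ?ler0n ?invf_le1 ?ltr0n ?ler1n.
Qed.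

Lemma image_set_convex_cone n m (A : 'M[R]_(n, m)) K :
  is_convex_cone K -> is_convex_cone (image_set A K).
Proof.
move=> [Kscale Kconvex]; split.
- move=> _ t [x [Kx ->]] t0; exists (t *: x).
  by rewrite -scalemxAl; split; first exact: Kscale.
- move=> _ _ t [x [Kx ->]] [y [Ky ->]] t0 t1; exists (t *: x + (1 - t) *: y).
  by rewrite mulmxDl -!scalemxAl; split; first exact: Kconvex.
Qed.

Lemma is_face_min_face n (S C : 'rV[R]_n -> Prop) :
  is_convex C -> (forall s, S s -> C s) -> is_face C (min_face S C).
Proof.
move=> Cconvex SC; split; [|split].
- move=> x minx; apply: minx SC.
  by split; [|split] => // x0 y0 t Cx Cy.
- move=> x y t Gx Gy t0 t1 G faceG SG.
  by apply: faceG.2.1 => //; [apply: Gx | apply: Gy].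
- move=> x y t Cx Cy t0 t1 Gxy; split=> G faceG SG.
  + by have [] := faceG.2.2 x y t Cx Cy t0 t1 (Gxy G faceG SG).
  + by have [] := faceG.2.2 x y t Cx Cy t0 t1 (Gxy G faceG SG).
Qed.

Lemma is_face_preimage n m (A : 'M[R]_(n, m)) K G :
  is_convex K -> is_face (image_set A K) G ->
  is_face K (fun x => K x /\ G (x *m A)).
Proof.
move=> Kconvex [_ [Gconvex Gextreme]]; split; [by move=> x []|split].
- move=> x y t [Kx Gx] [Ky Gy] t0 t1; split; first exact: Kconvex.
  by rewrite mulmxDl -!scalemxAl; apply: Gconvex.
- move=> x y t Kx Ky t0 t1 [_ Gxy].
  rewrite mulmxDl -!scalemxAl in Gxy.
  have [||Gx Gy] := Gextreme (x *m A) (y *m A) t _ _ t0 t1 Gxy.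
  + by exists x.
  + by exists y.
  by do 2!split.
Qed.

(* The points of C below some multiple [l *: b] in the order of C; requiring
   [l > 1] is what makes [x] a strict convex combination in
   [min_face_feas_set]. *)
Definition dominated n (C : 'rV[R]_n -> Prop) (b z : 'rV[R]_n) : Prop :=
  C z /\ exists w l, C w /\ 1 < l /\ l *: b = z + w.

Lemma dominated_left n (C : 'rV[R]_n -> Prop) b x y t :
  is_convex_cone C -> C y -> 0 < t -> t < 1 ->
  dominated C b (t *: x + (1 - t) *: y) -> C x -> dominated C b x.
Proof.
move=> Ccone Cy t0 t1 [_ [w [l [Cw [l1 Ebl]]]]] Cx; split=> //.
exists (t^-1 *: ((1 - t) *: y + w)), (l / t); split; [|split].
- apply: Ccone.1; last by rewrite invr_ge0 ltW.
  by apply: convex_coneD => //; apply: Ccone.1 => //; lra.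
- by rewrite ltr_pdivlMr // mul1r; lra.
rewrite mulrC -scalerA Ebl -addrA scalerDr scalerA mulVf ?lt0r_neq0 //.
by rewrite scale1r.
Qed.

Lemma dominated_face n (C : 'rV[R]_n -> Prop) b :
  is_convex_cone C -> is_face C (dominated C b).
Proof.
move=> Ccone; split; [by move=> x []|split].
- move=> x y t [Cx [w1 [l1 [Cw1 [l11 E1]]]]] [Cy [w2 [l2 [Cw2 [l21 E2]]]]] t0 t1.
  split; first exact: Ccone.2.
  exists (t *: w1 + (1 - t) *: w2), (t * l1 + (1 - t) * l2).
  split; first exact: Ccone.2.
  split.
    have [->|t_pos] := eqVneq t 0; first lra.
    have t_gt0 : 0 < t by rewrite lt0r t_pos.
    have : 0 < t * (l1 - 1) by apply: mulr_gt0; lra.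
    have : 0 <= (1 - t) * (l2 - 1) by apply: mulr_ge0; lra.
    lra.
  by rewrite scalerDl -!scalerA E1 E2 !scalerDr addrACA.
- move=> x y t Cx Cy t0 t1 Dxy; split; first exact: dominated_left Dxy Cx.
  apply: (@dominated_left _ _ _ y x (1 - t)) => //; try lra.
  by rewrite subKr addrC.
Qed.

Lemma min_face_dominated n (C : 'rV[R]_n -> Prop) b z :
  is_convex_cone C -> C b -> min_face (fun s => s = b) C z -> dominated C b z.
Proof.
move=> Ccone Cb; apply; first exact: dominated_face.
move=> _ ->; split=> //; exists b, 2; split=> //; split; first lra.
by rewrite scaler_nat mulr2n.
Qed.

Lemma min_face_feas_set n m (A : 'M[R]_(n, m)) K b x :
  is_convex_cone K -> (exists X, feas_set A K b X) ->
  min_face (feas_set A K b) K x <->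
  K x /\ min_face (fun z => z = b) (image_set A K) (x *m A).
Proof.
move=> Kcone [X0 [KX0 EX0]].
have MKb : image_set A K b by exists X0.
have MKcone := image_set_convex_cone A Kcone.
split.
- move=> minx; apply: (minx (fun y => K y /\ _ (y *m A))).
    apply: is_face_preimage; first exact: Kcone.2.
    by apply: is_face_min_face; [exact: MKcone.2 | move=> _ ->].
  by move=> y [Ky ->]; split=> // G _; apply.
- move=> [Kx MGx] G faceG FG.
  have [_ [_ [l [[x' [Kx' ->]] [l1 Ebl]]]]] := min_face_dominated MKcone MKb MGx.
  (* u := (x + x') / l is feasible and lies strictly between x and x' / (l - 1) *)
  have l0 : l != 0 by rewrite gt_eqF //; lra.
  have l10 : l - 1 != 0 by rewrite subr_eq0 gt_eqF.
  have Kx'' : K ((l - 1)^-1 *: x') by apply: Kcone.1 => //; rewrite invr_ge0; lra.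
  pose u := l^-1 *: x + (1 - l^-1) *: ((l - 1)^-1 *: x').
  have Eu : u = l^-1 *: (x + x').
    rewrite /u scalerDr scalerA; congr (_ + _ *: _).
    have -> : 1 - l^-1 = (l - 1) / l by rewrite mulrBl mulfV // mul1r.
    by rewrite mulrAC mulfV // mul1r.
  have Fu : feas_set A K b u.
    rewrite Eu; split; first by apply: Kcone.1; [exact: convex_coneD | rewrite invr_ge0; lra].
    by rewrite -scalemxAl mulmxDl -Ebl scalerA mulVf // scale1r.
  have [||//] := faceG.2.2 _ _ (l^-1) Kx Kx'' _ _ (FG u Fu).
  + by rewrite invr_gt0; lra.
  + by rewrite invf_lt1; lra.
Qed.

Lemma face_chain_antitone n d (Fs : nat -> 'rV[R]_n -> Prop) :
  (forall i, (i < d)%N -> is_exposed_face (Fs i) (Fs i.+1)) ->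
  forall j k z, (k <= j <= d)%N -> Fs j z -> Fs k z.
Proof.
move=> exposed; elim=> [|j IH] k z /andP[kj jd] Fjz.
  by move: kj; rewrite leqn0 => /eqP ->.
move: kj; rewrite leq_eqVlt => /orP[/eqP -> // | kj].
apply: IH; first by rewrite -ltnS kj (ltnW jd).
have [v [_ Fnext]] := exposed j jd.
by have [] := (Fnext z).1 Fjz.
Qed.

End ConeFaces.

Section FacialReduction.
Variables (R : realFieldType) (n m : nat) (A : 'M[R]_(n, m)).
Variables (K : 'rV[R]_n -> Prop) (b : 'rV[R]_m).
Hypothesis Kcone : is_convex_cone K.
Hypothesis feasible : exists X, feas_set A K b X.

Let faceb := min_face (fun z => z = b) (image_set A K).

Lemma fr_sequence_face_chain d : fr_sequence A K b d -> face_chain (image_set A K) faceb d.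
Proof.
have [X0 [KX0 EX0]] := feasible.
have MKb : image_set A K b by exists X0.
move=> [ys [Ks [Ks0 [Ksstep Ksd]]]].
exists (fun i z => exists x, Ks i x /\ z = x *m A); split; [|split].
- by move=> z; split=> -[x [Kx ->]]; exists x; split=> //; apply/Ks0.
- move=> i ltid; have [yi_dual [_ Ksnext]] := Ksstep i ltid; exists (ys i); split.
  + by move=> _ [x [Kx ->]]; rewrite dotv_mulmx; apply: yi_dual.
  + move=> z; split.
    * move=> [x [Kx ->]]; have [Kix yx0] := (Ksnext x).1 Kx.
      by split; [exists x | rewrite dotv_mulmx].
    * move=> [[x [Kix ->]] yx0]; exists x; split=> //.
      by apply/Ksnext; rewrite -dotv_mulmx.
- move=> z; split.
  + by move=> [x [Kdx ->]]; have [] := (min_face_feas_set x Kcone feasible).1 ((Ksd x).1 Kdx).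
  + move=> Gz; have [[x [Kx Ez]] _] := min_face_dominated (image_set_convex_cone A Kcone) MKb Gz.
    exists x; split=> //; apply/Ksd/(min_face_feas_set x Kcone feasible).
    by rewrite -Ez.
Qed.

Lemma face_chain_fr_sequence d : face_chain (image_set A K) faceb d -> fr_sequence A K b d.
Proof.
move=> [Fs [Fs0 [exposed Fsd]]].
pose exposing i v := dual_cone (Fs i) v /\
  forall z, Fs i.+1 z <-> (Fs i z /\ dotv v z = 0).
have [ys ys_exposing] : exists ys, forall i, (i < d)%N -> exposing i (ys i).
  apply: (choice (fun i v => (i < d)%N -> exposing i v)) => i.
  by case: (ltnP i d) => [/exposed [v ?] | _]; [exists v | exists 0].
have Fdb : Fs d b by apply/Fsd => G _; apply.
exists ys, (fun i x => K x /\ Fs i (x *m A)); split; [|split].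
- by move=> x; split=> [[]//|Kx]; split=> //; apply/Fs0; exists x.
- move=> i ltid; have [yi_dual Fnext] := ys_exposing i ltid; split; [|split].
  + by move=> x [Kx Fix]; rewrite -dotv_mulmx; apply: yi_dual.
  + rewrite dotvC; apply: (proj2 ((Fnext b).1 _)).
    by apply: (face_chain_antitone exposed _ Fdb); rewrite ltid leqnn.
  + move=> x; rewrite Fnext dotv_mulmx; tauto.
- move=> x; rewrite min_face_feas_set // -/faceb.
  by split=> -[Kx Gx]; split=> //; apply/Fsd.
Qed.

End FacialReduction.

Theorem mainTheorem6 (R : realType) (n m : nat) (A : 'M[R]_(n, m))
  (K : 'rV[R]_n -> Prop) (b : 'rV[R]_m) :
  (forall y : 'rV[R]_m, exists X : 'rV[R]_n, X *m A = y) ->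
  is_convex_cone K ->
  (exists X, feas_set A K b X) ->
  forall d : nat,
    system_sd A K b d <->
    face_sd (image_set A K) (min_face (fun z => z = b) (image_set A K)) d.
Proof.
move=> _ Kcone feasible d.
have chainE d' : fr_sequence A K b d' <->
    face_chain (image_set A K) (min_face (fun z => z = b) (image_set A K)) d'.
  by split; [exact: fr_sequence_face_chain | exact: face_chain_fr_sequence].
split=> -[chain minimal]; split=> [|d' ltd' chain'].
- by apply/chainE.
- by apply: (minimal d' ltd'); apply/chainE.
- by apply/chainE.
- by apply: (minimal d' ltd'); apply/chainE.
Qed.
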